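(* Let $(W,S)$ be a finite Coxeter system and $K\subseteq S$. Suppose $w\in{}^K W$ is such that ${}^{S\setminus\{s\}}w=e$ for all $s\in S\setminus K$. Then $w=e$.
   Context: For $J\subseteq S$, $W_J$ is the parabolic subgroup generated by $J$, ${}^J w$ denotes the unique minimal-length element of the coset $W_Jw$, and ${}^J W=\{{}^J w:w\in W\}$. $e$ is the identity. *)

From mathcomp Require Import all_boot all_fingroup.
Set Implicit Arguments. Unset Strict Implicit. Unset Printing Implicit Defensive.
Local Open Scope group_scope.

Section Coxeter.
Variable gT : finGroupType.

(* (W,S) is a Coxeter system: S generates W, consists of involutions, and
   W has the Coxeter presentation  < S | (s t)^{m(s,t)} = 1 >  with
   m(s,t) = order of s t, i.e. every map f from S to any group satisfying
   these relations extends to a group homomorphism W -> target. *)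
Definition coxeter_system (W : {group gT}) (S : {set gT}) : Prop :=
  [/\ <<S>> = W :> {set gT},
      {in S, forall s, #[s] = 2%N} &
      forall (T : Type) (mul : T -> T -> T) (one : T) (inv : T -> T),
        associative mul -> left_id one mul -> left_inverse one inv mul ->
        forall f : gT -> T,
        {in S &, forall s t, iter #[s * t] (mul (mul (f s) (f t))) one = one} ->
        exists phi : gT -> T,
          {in W &, forall x y, phi (x * y) = mul (phi x) (phi y)} /\
          {in S, forall s, phi s = f s}].

Definition word_of (S : {set gT}) (t : seq gT) (w : gT) : Prop :=
  all (fun x => x \in S) t /\ \prod_(x <- t) x = w.

Definition cox_length (S : {set gT}) (w : gT) (n : nat) : Prop :=
  (exists t, word_of S t w /\ size t = n) /\
  (forall t, word_of S t w -> (n <= size t)%N).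

(* min_coset_rep S J w u : u = ^J w, i.e. u is the minimal-length element of
   the right coset W_J w, where W_J = <<J>>. *)
Definition min_coset_rep (S J : {set gT}) (w u : gT) : Prop :=
  u \in <<J>> :* w /\
  forall v, v \in <<J>> :* w ->
    forall m n, cox_length S u m -> cox_length S v n -> (m <= n)%N.

End Coxeter.

From mathcomp Require Import all_boot all_fingroup.
Set Implicit Arguments. Unset Strict Implicit. Unset Printing Implicit Defensive.
Local Open Scope group_scope.

(* If w <> 1, let x be the first letter of a reduced word of w, so that
   l(x w) < l(w).  Minimality of w in W_K w forces x \notin K, hence
   w \in W_(S - x).  But a left descent of an element of a standard parabolic
   subgroup W_J lies in W_J (exchange condition), whereas x \notin W_(S - x)
   (deletion condition): a contradiction.
   Both conditions come from Tits' reflection cocycle: by the Coxeter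
   presentation, letting s act on pairs (r, e) by (r, e) |-> (s r s, e + [r = s])
   defines an action of W, so the parity of the number of occurrences of r in
   the reflection sequence of a word over S only depends on the element it
   represents.  Consequently a word is reduced iff its reflections are
   pairwise distinct. *)

Lemma subseq_all (T : eqType) (p : pred T) (s1 s2 : seq T) :
  subseq s1 s2 -> all p s2 -> all p s1.
Proof. by move=> sub12 /allP p2; apply/allP => x /(mem_subseq sub12) /p2. Qed.

Section ReflectionCocycle.
Variable gT : finGroupType.
Implicit Types (a : seq gT) (r s t x y : gT).

Lemma conjgg x : x ^ x = x.
Proof. by rewrite conjgE mulKg. Qed.

Lemma mem_map_conjg a r y : (r \in [seq x ^ y | x <- a]) = (r ^ y^-1 \in a).
Proof. by rewrite -[in RHS](mem_map (conjg_inj y)) /= conjgKV. Qed.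

Lemma prod_mem_gen (A : {set gT}) a :
  all (fun x => x \in A) a -> \prod_(x <- a) x \in <<A>>.
Proof. by move=> /allP aA; rewrite big_seq group_prod // => x /aA /mem_gen. Qed.

(* For a = s_1 ... s_n, the i-th entry is s_1 ... s_(i-1) s_i s_(i-1) ... s_1. *)
Fixpoint refl_seq a : seq gT :=
  if a is x :: a' then x :: [seq r ^ x^-1 | r <- refl_seq a'] else [::].

Definition flip_parity a r : bool := odd (count_mem r (refl_seq a)).

Lemma size_refl_seq a : size (refl_seq a) = size a.
Proof. by elim: a => //= x a IHa; rewrite size_map IHa. Qed.

Lemma mem_refl_seq_cons x a r :
  (r \in refl_seq (x :: a)) = (r == x) || (r ^ x \in refl_seq a).
Proof. by rewrite in_cons mem_map_conjg invgK. Qed.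

Lemma uniq_refl_seq_cons x a :
  uniq (refl_seq (x :: a)) = (x \notin refl_seq a) && uniq (refl_seq a).
Proof. by rewrite /= mem_map_conjg invgK conjgg map_inj_uniq //; apply: conjg_inj. Qed.

Lemma flip_parity_cons x a r :
  flip_parity (x :: a) r = (r == x) (+) flip_parity a (r ^ x).
Proof.
rewrite /flip_parity /= count_map oddD oddb eq_sym; congr (_ (+) odd _).
by apply: eq_count => y; rewrite /= -(inj_eq (conjg_inj x)) conjgKV.
Qed.

Definition refl_perm_fun s (z : gT * bool) : gT * bool :=
  (z.1 ^ s, z.2 (+) (z.1 == s)).

Lemma refl_perm_fun_inj s : injective (refl_perm_fun s).
Proof. by move=> [r e] [r' e'] [/conjg_inj <- /addIb <-]. Qed.

Definition refl_perm s : {perm gT * bool} := perm (@refl_perm_fun_inj s).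

Lemma refl_perm_prod a r e :
  (\prod_(x <- a) refl_perm x) (r, e) =
    (r ^ \prod_(x <- a) x, e (+) flip_parity a r).
Proof.
elim: a r e => [|x a IHa] r e; first by rewrite !big_nil perm1 conjg1 addbF.
by rewrite !big_cons permM permE /refl_perm_fun /= IHa conjgM flip_parity_cons addbA.
Qed.

Definition alt_word s t n : seq gT := iter n (fun a => s :: t :: a) [::].

Lemma prod_alt_word (hT : finGroupType) (F : gT -> hT) s t n :
  \prod_(x <- alt_word s t n) F x = (F s * F t) ^+ n.
Proof. by elim: n => [|n IHn]; rewrite ?big_nil //= !big_cons IHn expgS mulgA. Qed.

Section Dihedral.
Variables s t : gT.
Hypotheses (ss1 : s * s = 1) (tt1 : t * t = 1).

Lemma refl_seq_alt_word n :
  refl_seq (alt_word s t n) = [seq (s * t) ^+ j * s | j <- iota 0 n.*2].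
Proof.
have sV : s^-1 = s by apply/eqP; rewrite eq_invg_mul ss1.
have tV : t^-1 = t by apply/eqP; rewrite eq_invg_mul tt1.
elim: n => //= n IHn.
rewrite IHn -!map_comp -[iota 2 _]/(iota (2 + 0) _) iotaDl -map_comp.
congr [:: _, _ & _]; first by rewrite expg0 mul1g.
  by rewrite conjgE invgK sV mulgA.
apply: eq_map => j /=; rewrite -conjgM -invMg conjgE invgK invMg sV tV.
by rewrite addnC expgD expgS expg1 !mulgA (commuteX j (commute_refl (s * t))) !mulgA.
Qed.

(* As u = s t has order m, the reflections u^j s (j < 2 m) of (s t)^m form a
   list repeated twice, so all their multiplicities are even. *)
Lemma refl_perm_coxeter_rel :
  iter #[s * t] ( *%g (refl_perm s * refl_perm t)) 1 = 1.
Proof.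
set m := #[s * t]; rewrite iter_mulg_1 -prod_alt_word.
apply/permP => -[r e]; rewrite refl_perm_prod perm1.
have -> : \prod_(x <- alt_word s t m) x = 1 by rewrite (prod_alt_word id) expg_order.
rewrite conjg1 /flip_parity refl_seq_alt_word -addnn iotaD.
have -> : iota (0 + m) m = map (addn m) (iota 0 m) by rewrite -iotaDl addn0.
rewrite map_cat -map_comp (@eq_map _ _ (_ \o addn m) (fun j => (s * t) ^+ j * s)).
  by rewrite count_cat addnn odd_double addbF.
by move=> j /=; rewrite expgD expg_order mul1g.
Qed.
End Dihedral.
End ReflectionCocycle.

Section ReducedWords.
Variables (gT : finGroupType) (S : {set gT}).
Implicit Types (a c : seq gT) (r x : gT).

Definition reduced a : Prop :=
  all (fun x => x \in S) a /\
  forall c, word_of S c (\prod_(x <- a) x) -> size a <= size c.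

Lemma reduced_cox_length a : reduced a -> cox_length S (\prod_(x <- a) x) (size a).
Proof. by case=> aS a_min; split=> //; exists a. Qed.

Lemma reduced_behead x a : reduced (x :: a) -> reduced a.
Proof.
case=> /andP[xS aS] xa_min; split=> // c [cS Ec].
by have := xa_min (x :: c); rewrite /word_of /= xS cS !big_cons Ec ltnS; apply.
Qed.

Hypothesis invS : {in S, forall s, s * s = 1}.

Lemma refl_seq_delete a r : all (fun x => x \in S) a -> r \in refl_seq a ->
  exists a', [/\ subseq a' a, size a' < size a &
                 \prod_(x <- a') x = r * \prod_(x <- a) x].
Proof.
elim: a r => [|x a IHa] r; first by [].
case/andP=> xS aS; rewrite mem_refl_seq_cons => /orP[/eqP->|].
  by exists a; rewrite subseq_cons big_cons mulgA invS ?mul1g.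
case/(IHa _ aS) => a' [sub_a' lt_a' Ea']; exists (x :: a').
by rewrite /= eqxx sub_a' ltnS lt_a' !big_cons Ea' conjgE !mulgA mulgV mul1g.
Qed.

Lemma reduced_uniq_refl_seq a : reduced a -> uniq (refl_seq a).
Proof.
elim: a => [|x a IHa] // xa_red; have [/andP[_ aS] xa_min] := xa_red.
rewrite uniq_refl_seq_cons IHa ?andbT; last exact: reduced_behead xa_red.
apply/negP => /(refl_seq_delete aS)[a' [sub_a' lt_a' Ea']].
have : size (x :: a) <= size a'.
  by apply: xa_min; split; [exact: subseq_all sub_a' aS | rewrite big_cons Ea'].
by rewrite ltnNge ltnW.
Qed.

End ReducedWords.

Section CoxeterSystem.
Variables (gT : finGroupType) (W : {group gT}) (S : {set gT}).
Hypothesis coxS : coxeter_system W S.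
Implicit Types (a c d : seq gT) (w x : gT).

Lemma coxeter_involution : {in S, forall s, s * s = 1}.
Proof. by have [_ ord2 _] := coxS => s /ord2 ord_s; rewrite -expg2 -ord_s expg_order. Qed.

Lemma flip_parity_prod a c : all (fun x => x \in S) a -> all (fun x => x \in S) c ->
  \prod_(x <- a) x = \prod_(x <- c) x -> flip_parity a =1 flip_parity c.
Proof.
have [genS _ univS] := coxS; have invS := coxeter_involution.
have [phi [phiM phiS]] := univS _ *%g 1 _ (@mulgA _) (@mul1g _) (@mulVg _)
  (@refl_perm gT) (fun s t sS tS => refl_perm_coxeter_rel (invS s sS) (invS t tS)).
have phi1 : phi 1 = 1 by apply: (mulIg (phi 1)); rewrite -phiM ?mulg1 ?mul1g.
have phi_word b : all (fun x => x \in S) b ->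
    phi (\prod_(x <- b) x) = \prod_(x <- b) refl_perm x.
  elim: b => [|x b IHb]; first by rewrite !big_nil.
  case/andP=> xS bS; rewrite !big_cons phiM -?genS ?prod_mem_gen ?mem_gen //.
  by rewrite phiS ?IHb.
move=> aS cS Eac r; have := refl_perm_prod a r false.
by rewrite -phi_word // Eac phi_word // refl_perm_prod => -[->].
Qed.

Lemma uniq_refl_seq_reduced a :
  all (fun x => x \in S) a -> uniq (refl_seq a) -> reduced S a.
Proof.
move=> aS a_uniq; split=> // c [cS Ec].
rewrite -(size_refl_seq a) -(size_refl_seq c); apply: uniq_leq_size => // r r_a.
have : flip_parity c r.
  by rewrite -(flip_parity_prod aS cS (esym Ec)) /flip_parity count_uniq_mem ?r_a.
by apply: contraLR => /count_memPn; rewrite /flip_parity => ->.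
Qed.

Lemma reduced_cons x a :
  x \in S -> reduced S a -> x \notin refl_seq a -> reduced S (x :: a).
Proof.
move=> xS a_red x_a; apply: uniq_refl_seq_reduced; first by rewrite /= xS a_red.1.
by rewrite uniq_refl_seq_cons x_a (reduced_uniq_refl_seq coxeter_involution).
Qed.

Lemma reduced_subseq d : all (fun x => x \in S) d ->
  exists d', [/\ subseq d' d, reduced S d' & \prod_(x <- d') x = \prod_(x <- d) x].
Proof.
have [n] := ubnP (size d); elim: n d => // n IHn [|y d] /=.
  by move=> _ _; exists [::]; do !split.
rewrite ltnS => lt_d_n /andP[yS dS].
have [d0 [sub_d0 d0_red Ed0]] := IHn d lt_d_n dS.
case: (boolP (y \in refl_seq d0)) => [y_d0 | /(reduced_cons yS d0_red) yd0_red].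
  have [d1 [sub_d1 _ Ed1]] := refl_seq_delete coxeter_involution d0_red.1 y_d0.
  have [|d2 [sub_d2 d2_red Ed2]] := IHn d1 _ (subseq_all sub_d1 d0_red.1).
    rewrite (leq_ltn_trans (size_subseq sub_d1)) //.
    exact: leq_ltn_trans (size_subseq sub_d0) lt_d_n.
  exists d2; split=> //; last by rewrite Ed2 Ed1 Ed0 big_cons.
  exact: subseq_trans sub_d2 (subseq_trans sub_d1 (subseq_trans sub_d0 (subseq_cons _ _))).
by exists (y :: d0); rewrite /= eqxx sub_d0 !big_cons Ed0.
Qed.

Lemma exists_reduced_word (J : {set gT}) w : J \subset S -> w \in <<J>> ->
  exists a, [/\ all (fun x => x \in J) a, reduced S a & \prod_(x <- a) x = w].
Proof.
move=> sJS /gen_prodgP[n [c cJ ->]]; set d := [seq c i | i <- enum 'I_n].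
have dJ : all (fun x => x \in J) d by apply/allP => _ /mapP[i _ ->].
have [|a [sub_a a_red Ea]] := @reduced_subseq d.
  by apply/allP => x /(allP dJ) /(subsetP sJS).
by exists a; rewrite (subseq_all sub_a dJ) Ea big_map enumT.
Qed.

Lemma descent_mem_parabolic (J : {set gT}) x a : J \subset S -> reduced S (x :: a) ->
  \prod_(y <- x :: a) y \in <<J>> -> x \in <<J>>.
Proof.
move=> sJS xa_red w_J; have [/andP[xS aS] xa_min] := xa_red.
have [d [dJ d_red Ed]] := exists_reduced_word sJS w_J.
have x_d : x \in refl_seq d.
  apply: contraT => /(reduced_cons xS d_red)[_ xd_min].
  have le_xa_d : size (x :: a) <= size d by apply: xa_min; split; [exact: d_red.1 | ].
  have : size (x :: d) <= size a.
    apply: xd_min; split=> //; rewrite !big_cons Ed big_cons mulgA.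
    by rewrite coxeter_involution ?mul1g.
  by move/ltnW/(leq_trans le_xa_d); rewrite ltnn.
have [d' [sub_d' _ Ed']] := refl_seq_delete coxeter_involution d_red.1 x_d.
have -> : x = \prod_(y <- d') y * (\prod_(y <- d) y)^-1 by rewrite Ed' mulgK.
by rewrite groupM ?groupV ?Ed // prod_mem_gen // (subseq_all sub_d' dJ).
Qed.

Lemma generator_notin_parabolic s : s \in S -> s \notin <<S :\ s>>.
Proof.
move=> sS; apply/negP => /(exists_reduced_word (subsetDl S [set s]))[a [aJ [_ a_min] Ea]].
have : size a <= 1 by apply: (a_min [:: s]); rewrite Ea; split; rewrite ?big_seq1 //= sS.
case: a aJ Ea {a_min} => [_ | y [|//]] /=.
  rewrite big_nil => s1 _; have [_ ord2 _] := coxS.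
  by have := ord2 s sS; rewrite -s1 order1.
by rewrite big_seq1 andbT !inE => /andP[/eqP y_s _] /y_s.
Qed.

End CoxeterSystem.

Theorem lemma3p6 (gT : finGroupType) (W : {group gT}) (S K : {set gT})
  (w : gT) :
  coxeter_system W S ->
  K \subset S ->
  w \in W ->
  (exists v, v \in W /\ min_coset_rep S K v w) ->
  (forall s, s \in S :\: K -> min_coset_rep S (S :\ s) w 1) ->
  w = 1.
Proof.
move=> coxS _ wW [v [_ [wKv w_min]]] w_par.
have [genS _ _] := coxS; have invS := coxeter_involution coxS.
have wS : w \in <<S>> by rewrite genS.
have [[|x a] [_ xa_red Ew]] := exists_reduced_word coxS (subxx S) wS.
  by rewrite -Ew big_nil.
have [/andP[xS _] _] := xa_red.
have xK : x \notin K.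
  apply/negP => xK.
  have xw_coset : x * w \in <<K>> :* v.
    by rewrite mem_rcoset -mulgA groupM ?(mem_gen xK) // -mem_rcoset.
  have xw_a : x * w = \prod_(y <- a) y by rewrite -Ew big_cons mulgA invS ?mul1g.
  have w_len := reduced_cox_length xa_red; rewrite Ew in w_len.
  have xw_len := reduced_cox_length (reduced_behead xa_red); rewrite -xw_a in xw_len.
  by have := w_min _ xw_coset _ _ w_len xw_len; rewrite ltnn.
have [] := w_par x; first by rewrite inE xK xS.
rewrite mem_rcoset mul1g groupV -Ew => w_par_x _.
have := descent_mem_parabolic coxS (subsetDl S [set x]) xa_red w_par_x.
by rewrite (negbTE (generator_notin_parabolic coxS xS)).
Qed.
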